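(* Let $1\le p\le 2$ and let $p'$ be the conjugate exponent, $1/p+1/p'=1$. Fix $N\ge 1$. Suppose that for every complex block matrix $S=\begin{pmatrix} S_1 & \cdots & S_N\\ R_1&\cdots&R_N\end{pmatrix}$ partitioned into $2\times N$ blocks one has $\|S\|_p\ge \|\mathcal C_p(S)\|_p$. Then for every complex block matrix $T=\begin{pmatrix} A_1 & \cdots & A_N\\ B_1&\cdots&B_N\end{pmatrix}$ partitioned into $2\times N$ blocks one has $\|T\|_{p'}\le \|\mathcal C_{p'}(T)\|_{p'}$.
   Context: For a matrix $X$ and $r\ge1$, $\|X\|_r=(\operatorname{Tr}|X|^r)^{1/r}$ is the Schatten $r$-norm, $|X|=(X^*X)^{1/2}$. A $2\times N$ partitioned block matrix has blocks $A_k$ (first block row) and $B_k$ (second block row), where all blocks in a block row have the same number of rows and all blocks in a block column have the same number of columns. Its Schatten $r$-norm compression is the $2\times N$ real matrix $\mathcal C_r(T)=\begin{pmatrix} \|A_1\|_r & \cdots & \|A_N\|_r\\ \|B_1\|_r&\cdots&\|B_N\|_r\end{pmatrix}$. *)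

From HB Require Import structures.
From mathcomp Require Import all_boot all_order all_algebra.
From mathcomp Require Import spectral sesquilinear.
From mathcomp Require Import complex.
From mathcomp Require Import reals exp.
Set Implicit Arguments. Unset Strict Implicit. Unset Printing Implicit Defensive.
Import Order.TTheory GRing.Theory Num.Theory Num.Def.
Local Open Scope ring_scope.
Local Open Scope complex_scope.
Local Open Scope sesquilinear_scope.

Definition cre {R : realType} (z : R[i]) : R := complex.Re z.

(* Continuous functional calculus for a (Hermitian) matrix A via the spectral
   theorem: A = U^-1 diag(d) U with U unitary (spectralmx A), and
   f(A) := U^* diag(f(Re d_i)) U. *)
Definition mxfun {R : realType} (f : R -> R) n (A : 'M[R[i]]_n) : 'M[R[i]]_n :=
  let U := spectralmx A in
  (U ^t conjC) *m diag_mx (\row_i ((f (cre (spectral_diag A 0 i)))%:C)) *m U.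

Definition absmx {R : realType} m n (X : 'M[R[i]]_(m, n)) : 'M[R[i]]_n :=
  mxfun (@Num.sqrt R) ((X ^t conjC) *m X).

Definition schatten {R : realType} (r : R) m n (X : 'M[R[i]]_(m, n)) : R :=
  powR (cre (\tr (mxfun (fun t => powR t r) (absmx X)))) r^-1.

Definition blockT {R : realType} (N m1 m2 : nat) (n : 'I_N -> nat)
  (A : forall k : 'I_N, 'M[R[i]]_(m1, n k)) (B : forall k : 'I_N, 'M[R[i]]_(m2, n k))
  : 'M[R[i]]_(m1 + m2, \sum_(k < N) n k) :=
  col_mx (\mxrow_(k < N) A k) (\mxrow_(k < N) B k).

(* Operator norm = Schatten infinity-norm = largest singular value of X
   (= largest eigenvalue of |X|); used for the conjugate exponent p' = oo when p = 1. *)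
Definition schatten_inf {R : realType} m n (X : 'M[R[i]]_(m, n)) : R :=
  \big[Num.max/0]_(j < n) Num.sqrt (cre (spectral_diag ((X ^t conjC) *m X) 0 j)).

Definition compress_with {R : realType} (nrm : forall m n, 'M[R[i]]_(m, n) -> R)
  (N m1 m2 : nat) (n : 'I_N -> nat)
  (A : forall k : 'I_N, 'M[R[i]]_(m1, n k)) (B : forall k : 'I_N, 'M[R[i]]_(m2, n k))
  : 'M[R[i]]_(2, N) :=
  \matrix_(i < 2, k < N) (if i == 0 :> nat then nrm _ _ (A k) else nrm _ _ (B k))%:C.

Definition compress {R : realType} (r : R) :=
  @compress_with R (fun m n (X : 'M[R[i]]_(m, n)) => schatten r X).

Definition compress_inf {R : realType} :=
  @compress_with R (fun m n (X : 'M[R[i]]_(m, n)) => schatten_inf X).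

From mathcomp Require Import all_boot all_order all_algebra.
From mathcomp Require Import spectral sesquilinear complex reals exp.
From mathcomp Require Import ring lra.
Set Implicit Arguments. Unset Strict Implicit. Unset Printing Implicit Defensive.
Import Order.TTheory GRing.Theory Num.Theory Num.Def.
Local Open Scope ring_scope.
Local Open Scope complex_scope.
Local Open Scope sesquilinear_scope.

(* For 1 < p and 1/p + 1/q = 1, the q-norm of T is attained against Y = T |T|^(q-2):
   Re tr (Y^* T) = ||T||_q^q while ||Y||_p = ||T||_q^(q/p).  Splitting Re tr (Y^* T) over
   the blocks and applying Hölder to each block gives Re tr (C_p(Y)^* C_q(T)), which by
   Hölder once more and the hypothesis is at most ||C_q(T)||_q ||Y||_p; dividing out gives
   ||T||_q <= ||C_q(T)||_q.  For p = 1 the same chain, run with Y = T times the spectral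
   projection onto one singular vector of T, bounds every singular value of T.
   Hölder for Schatten norms is a von Neumann-type trace bound: with X = K diag(s) V and
   Y = L diag(t) Q, K and L partial isometries, Re tr (Y^* X) <= sum t_j s_i w_ji for a
   doubly substochastic w, after which Young's inequality applies entrywise. *)

Section UnitaryCalculus.
Variable C : numClosedFieldType.

Lemma adjmxM m n p (A : 'M[C]_(m, n)) (B : 'M[C]_(n, p)) :
  (A *m B)^t* = B^t* *m A^t*.
Proof. by rewrite trmx_mul map_mxM. Qed.

Lemma unitary_adj_mulmx n (U : 'M[C]_n) : U \is unitarymx -> U^t* *m U = 1%:M.
Proof. by move=> uU; rewrite -invmx_unitary // mulVmx // unitarymx_unit. Qed.

Lemma diag_mxM n (d e : 'rV[C]_n) :
  diag_mx d *m diag_mx e = diag_mx (\row_i (d 0 i * e 0 i)).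
Proof. by apply/matrixP => i j; rewrite mul_diag_mx !mxE mulrnAr. Qed.

Lemma adj_diag_mx n (d : 'rV[C]_n) : (diag_mx d)^t* = diag_mx (map_mx conjC d).
Proof. by rewrite tr_diag_mx map_diag_mx. Qed.

Lemma adj_real_diag_mx n (d : 'rV[C]_n) : d \is a realmx -> (diag_mx d)^t* = diag_mx d.
Proof. by move=> /realmxC dR; rewrite adj_diag_mx dR. Qed.

Lemma mxtrace_unitary_conj n (W D : 'M[C]_n) :
  W \is unitarymx -> \tr (W^t* *m D *m W) = \tr D.
Proof. by move=> uW; rewrite mxtrace_mulC mulmxA (unitarymxP uW) mul1mx. Qed.

Lemma normalmx_spectral n (A : 'M[C]_n) : A \is normalmx ->
  A = (spectralmx A)^t* *m diag_mx (spectral_diag A) *m spectralmx A.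
Proof.
by move=> /orthomx_spectralP {1}->; rewrite invmx_unitary // spectral_unitarymx.
Qed.

Lemma unitary_conj_normalmx n (W : 'M[C]_n) (d : 'rV[C]_n) :
  W \is unitarymx -> W^t* *m diag_mx d *m W \is normalmx.
Proof.
move=> uW; apply/normalmxP; rewrite !adjmxM trmxCK adj_diag_mx !mulmxA.
rewrite !(mulmxtVK _ uW); congr (_ *m _).
by rewrite -!mulmxA diag_mx_comm.
Qed.

(* Entrywise, [(e i - d j) * M i j = 0]: [M] only links equal eigenvalues. *)
Lemma diag_mx_intertwine_map (g : C -> C) m n (M : 'M[C]_(m, n)) d e :
  diag_mx e *m M = M *m diag_mx d ->
  diag_mx (map_mx g e) *m M = M *m diag_mx (map_mx g d).
Proof.
move=> /matrixP eM; apply/matrixP => i j; have := eM i j.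
rewrite !mul_diag_mx !mul_mx_diag !mxE.
have [->|Mij_neq0] := eqVneq (M i j) 0; first by rewrite !mulr0 !mul0r.
rewrite [M i j * _]mulrC => /(mulIf Mij_neq0) ->; exact: mulrC.
Qed.

(* The functional calculus does not depend on the unitary diagonalization. *)
Lemma spectral_map_unitary_conj (g : C -> C) n (W : 'M[C]_n) (d : 'rV[C]_n) :
  W \is unitarymx ->
  (spectralmx (W^t* *m diag_mx d *m W))^t* *m
    diag_mx (map_mx g (spectral_diag (W^t* *m diag_mx d *m W))) *m
    spectralmx (W^t* *m diag_mx d *m W)
  = W^t* *m diag_mx (map_mx g d) *m W.
Proof.
move=> uW; set A := W^t* *m diag_mx d *m W.
have eA : A = _ := normalmx_spectral (unitary_conj_normalmx d uW).
have uU := spectral_unitarymx A.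
set U := spectralmx A in eA uU *; set e := spectral_diag A in eA *.
pose M := U *m W^t*.
have eM : diag_mx e *m M = M *m diag_mx d.
  have -> : diag_mx e = U *m A *m U^t*.
    by rewrite [in RHS]eA !mulmxA (unitarymxP uU) mul1mx mulmxtVK.
  by rewrite /A /M !mulmxA mulmxKtV // mulmxtVK.
have -> : U = M *m W by rewrite /M mulmxKtV.
have uM : M \is unitarymx by rewrite mul_unitarymx // trmxC_unitary.
clearbody M.
rewrite adjmxM !mulmxA -(mulmxA _ _ M) (diag_mx_intertwine_map g eM).
by rewrite mulmxA mulmxKtV.
Qed.

End UnitaryCalculus.

Section PolarFactor.
Variable C : numClosedFieldType.

Lemma adj_mulmx_diagE m n (Z : 'M[C]_(m, n)) j :
  (Z^t* *m Z) j j = \sum_k `|Z k j| ^+ 2.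
Proof. by rewrite mxE; apply: eq_bigr => k _; rewrite !mxE normCK mulrC. Qed.

Lemma mulmx_adj_diagE m n (Z : 'M[C]_(m, n)) i :
  (Z *m Z^t*) i i = \sum_k `|Z i k| ^+ 2.
Proof. by rewrite mxE; apply: eq_bigr => k _; rewrite !mxE normCK. Qed.

Lemma adj_mulmx_diag_ge0 m n (Z : 'M[C]_(m, n)) j : 0 <= (Z^t* *m Z) j j.
Proof. by rewrite adj_mulmx_diagE sumr_ge0 // => k _; rewrite exprn_ge0. Qed.

Lemma adj_mulmx_diag_eq0 m n (Z : 'M[C]_(m, n)) j :
  (Z^t* *m Z) j j = 0 -> forall k, Z k j = 0.
Proof.
rewrite adj_mulmx_diagE => /psumr_eq0P Z0 k; apply/eqP.
by rewrite -normr_eq0 -sqrf_eq0 Z0 // => i _; rewrite exprn_ge0.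
Qed.

Lemma adj_mulmx_normalmx m n (X : 'M[C]_(m, n)) : X^t* *m X \is normalmx.
Proof. by apply/normalmxP; rewrite adjmxM trmxCK. Qed.

Lemma adj_mulmx_unitary_conj m n (X : 'M[C]_(m, n)) (W D : 'M[C]_n) :
  W \is unitarymx -> X^t* *m X = W^t* *m D *m W ->
  (X *m W^t*)^t* *m (X *m W^t*) = D.
Proof.
move=> uW eX; rewrite adjmxM trmxCK !mulmxA -(mulmxA W) eX !mulmxA.
by rewrite (unitarymxP uW) mul1mx mulmxtVK.
Qed.

Lemma unitary_conj_diag_ge0 m n (X : 'M[C]_(m, n)) (W : 'M[C]_n) d :
  W \is unitarymx -> X^t* *m X = W^t* *m diag_mx d *m W -> forall i, 0 <= d 0 i.
Proof.
move=> uW /(adj_mulmx_unitary_conj uW) eP i.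
by have := adj_mulmx_diag_ge0 (X *m W^t*) i; rewrite eP mxE eqxx mulr1n.
Qed.

Lemma partial_isometry_diag_le m n p (K : 'M[C]_(m, n)) (Z : 'M[C]_(m, p)) j :
  K *m K^t* *m K = K -> (Z^t* *m (K *m K^t*) *m Z) j j <= (Z^t* *m Z) j j.
Proof.
move=> KK; set P := K *m K^t*.
have P_adj : P^t* = P by rewrite /P adjmxM trmxCK.
have PP : P *m P = P by rewrite /P mulmxA KK.
clearbody P.
have : 0 <= ((Z - P *m Z)^t* *m (Z - P *m Z)) j j by exact: adj_mulmx_diag_ge0.
have -> : (Z - P *m Z)^t* = Z^t* - (P *m Z)^t* by rewrite linearB /= map_mxB.
rewrite adjmxM P_adj mulmxBl !mulmxBr !mulmxA.
by rewrite -(mulmxA _ P P) PP subrr subr0 !mxE subr_ge0.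
Qed.

Lemma polar_factor m n (X : 'M[C]_(m, n)) (V : 'M[C]_n) (s : 'rV[C]_n) :
  V \is unitarymx -> s \is a realmx ->
  X^t* *m X = V^t* *m diag_mx s *m diag_mx s *m V ->
  exists K : 'M[C]_(m, n),
    [/\ X = K *m diag_mx s *m V, K *m K^t* *m K = K
      & forall i, (K^t* *m K) i i <= 1].
Proof.
move=> uV sR eX; pose P := X *m V^t*.
have eP : P^t* *m P = diag_mx s *m diag_mx s.
  by apply: adj_mulmx_unitary_conj => //; rewrite eX !mulmxA.
have XP : X = P *m V by rewrite mulmxKtV.
clearbody P.
pose si := map_mx GRing.inv s.
have siR : si \is a realmx.
  by apply/mxOverP => i j; rewrite mxE rpredV //; move/mxOverP: sR.
pose K := P *m diag_mx si.
have col0 i : s 0 i = 0 -> forall k, P k i = 0.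
  move=> si0; apply: adj_mulmx_diag_eq0.
  by rewrite eP diag_mxM mxE eqxx mulr1n mxE si0 mulr0.
have KsP : K *m diag_mx s = P.
  apply/matrixP => k i; rewrite (mul_mx_diag K) /K (mul_mx_diag P) !mxE.
  have [s0|s_neq0] := eqVneq (s 0 i) 0; first by rewrite col0 // !mul0r.
  by rewrite -mulrA mulVf // mulr1.
pose ind := \row_i ((s 0 i != 0)%:R : C).
have KK : K^t* *m K = diag_mx ind.
  rewrite adjmxM adj_real_diag_mx // mulmxA -(mulmxA _ (P^t*)) eP !diag_mxM.
  congr diag_mx; apply/rowP => i; rewrite !mxE; move: (s 0 i) => x.
  have [->|x_neq0] := eqVneq x 0; first by rewrite invr0 !mul0r.
  by rewrite mulrA mulVf // mul1r mulfV.
exists K; split.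
- by rewrite KsP.
- rewrite -mulmxA KK; apply/matrixP => k i.
  rewrite (mul_mx_diag K) /K (mul_mx_diag P) !mxE.
  by case: eqP => [->|_]; rewrite ?invr0 ?mulr0 ?mulr1.
- by move=> i; rewrite KK mxE eqxx mulr1n mxE; case: (s 0 i != 0); rewrite ?ler01.
Qed.

Lemma trace_adj_mul_factor m n (X Y : 'M[C]_(m, n)) (V Q : 'M[C]_n) (s t : 'rV[C]_n) :
  V \is unitarymx -> Q \is unitarymx -> s \is a realmx -> t \is a realmx ->
  X^t* *m X = V^t* *m diag_mx s *m diag_mx s *m V ->
  Y^t* *m Y = Q^t* *m diag_mx t *m diag_mx t *m Q ->
  exists H M : 'M[C]_n,
    [/\ \tr (Y^t* *m X) = \tr (diag_mx t *m H *m diag_mx s *m M),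
        forall j, (H *m H^t*) j j <= 1, forall i, (H^t* *m H) i i <= 1
      & M \is unitarymx].
Proof.
move=> uV uQ sR tR eX eY.
have [K [XK KK K_le1]] := polar_factor uV sR eX.
have [L [YL LL L_le1]] := polar_factor uQ tR eY.
exists (L^t* *m K), (V *m Q^t*); split.
- by rewrite XK YL !adjmxM adj_real_diag_mx // -!mulmxA mxtrace_mulC !mulmxA.
- move=> j; rewrite adjmxM trmxCK mulmxA -(mulmxA (L^t*)).
  exact: le_trans (partial_isometry_diag_le L j KK) (L_le1 j).
- move=> i; rewrite adjmxM trmxCK mulmxA -(mulmxA (K^t*)).
  exact: le_trans (partial_isometry_diag_le K i LL) (K_le1 i).
- by rewrite mul_unitarymx // trmxC_unitary.
Qed.

Lemma unitary_conj_rescale m n (X : 'M[C]_(m, n)) (V : 'M[C]_n) (s g : 'rV[C]_n) :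
  V \is unitarymx -> g \is a realmx ->
  X^t* *m X = V^t* *m diag_mx s *m diag_mx s *m V ->
  let Y := X *m (V^t* *m diag_mx g *m V) in
  Y^t* *m Y = V^t* *m (diag_mx g *m diag_mx s) *m (diag_mx g *m diag_mx s) *m V
  /\ \tr (Y^t* *m X) = \tr (diag_mx g *m diag_mx s *m diag_mx s).
Proof.
move=> uV gR eX Y.
have eY : Y^t* = V^t* *m diag_mx g *m V *m X^t*.
  by rewrite !adjmxM trmxCK adj_real_diag_mx // !mulmxA.
have XX Z : Z *m X^t* *m X = Z *m V^t* *m (diag_mx s *m diag_mx s) *m V.
  by rewrite -mulmxA eX !mulmxA.
rewrite eY; split.
- rewrite !mulmxA XX !mulmxA !(mulmxtVK _ uV) -!mulmxA.
  by congr (_ *m (_ *m (_ *m _))); rewrite !mulmxA diag_mx_comm.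
- rewrite -mulmxA eX !mulmxA (mulmxtVK _ uV) -!mulmxA mxtrace_mulC !mulmxA.
  by rewrite (mulmxtVK _ uV).
Qed.

End PolarFactor.

Section WeightedHolder.
Variable R : realType.

Definition lpnorm (q : R) n (a : 'I_n -> R) : R := (\sum_i a i `^ q) `^ q^-1.

Definition doubly_substochastic n (w : 'I_n -> 'I_n -> R) :=
  [/\ forall j i, 0 <= w j i, forall j, \sum_i w j i <= 1 & forall i, \sum_j w j i <= 1].

Lemma conjugate_exponent_gt1 (p q : R) : 1 < p -> p^-1 + q^-1 = 1 -> 1 < q.
Proof.
move=> p_gt1 pq; have p_gt0 : 0 < p := lt_trans ltr01 p_gt1.
have qV : q^-1 = 1 - p^-1 by rewrite -pq addrC addKr.
have q_gt0 : 0 < q by rewrite -invr_gt0 qV subr_gt0 invf_lt1.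
by rewrite -invf_lt1 // qV gtrBl invr_gt0.
Qed.

Lemma lpnorm1 n (a : 'I_n -> R) : (forall i, 0 <= a i) -> lpnorm 1 a = \sum_i a i.
Proof.
move=> a0; rewrite /lpnorm invr1 powRr1 ?sumr_ge0 //; last by move=> i _; exact: powR_ge0.
by apply: eq_bigr => i _; rewrite powRr1.
Qed.

Lemma lpnorm_eq0 q n (a : 'I_n -> R) :
  (forall i, 0 <= a i) -> lpnorm q a = 0 -> forall i, a i = 0.
Proof.
move=> a0 /powR_eq0_eq0/eqP; rewrite psumr_eq0 => [/allP a_eq0 i|i _]; last first.
  exact: powR_ge0.
by have /implyP/(_ isT)/eqP/powR_eq0_eq0 := a_eq0 i (mem_index_enum i).
Qed.

Lemma sum_powR_div_lpnorm q n (a : 'I_n -> R) :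
  q != 0 -> (forall i, 0 <= a i) -> 0 < lpnorm q a ->
  \sum_i (a i / lpnorm q a) `^ q = 1.
Proof.
move=> q_neq0 a0 A_gt0; set A := lpnorm q a in A_gt0 *.
have SA : A `^ q = \sum_i a i `^ q.
  by rewrite -powRrM mulVf // powRr1 // sumr_ge0 // => i _; exact: powR_ge0.
have AV : (A^-1) `^ q = (A `^ q)^-1.
  by rewrite -powR_inv1 ?ltW // -powRrM mulN1r powRN.
under eq_bigr => i _ do rewrite powRM ?a0 ?invr_ge0 ?ltW // AV.
by rewrite -mulr_suml -SA mulfV // gt_eqF // powR_gt0.
Qed.

Lemma young_substochastic (p q : R) n (a b : 'I_n -> R) w :
  0 < p -> 0 < q -> p^-1 + q^-1 = 1 -> doubly_substochastic w ->
  (forall i, 0 <= a i) -> (forall j, 0 <= b j) ->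
  \sum_j \sum_i b j * a i * w j i <= (\sum_i a i `^ q) / q + (\sum_j b j `^ p) / p.
Proof.
move=> p_gt0 q_gt0 pq [w0 w_row w_col] a0 b0.
pose x i := a i `^ q / q; pose y j := b j `^ p / p.
have x0 i : 0 <= x i by rewrite divr_ge0 ?powR_ge0 ?ltW.
have y0 j : 0 <= y j by rewrite divr_ge0 ?powR_ge0 ?ltW.
apply: (@le_trans _ _ (\sum_j \sum_i w j i * (x i + y j))).
  apply: ler_sum => j _; apply: ler_sum => i _; rewrite mulrC ler_wpM2l //.
  by rewrite mulrC conjugate_powR // addrC.
have -> : \sum_j \sum_i w j i * (x i + y j)
          = \sum_i x i * \sum_j w j i + \sum_j y j * \sum_i w j i.
  transitivity (\sum_j \sum_i w j i * x i + \sum_j \sum_i w j i * y j).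
    rewrite -big_split; apply: eq_bigr => j _.
    by rewrite -big_split; apply: eq_bigr => i _; rewrite mulrDr.
  rewrite exchange_big; congr (_ + _); apply: eq_bigr => k _; rewrite mulr_sumr.
    by apply: eq_bigr => j _; rewrite mulrC.
  by apply: eq_bigr => i _; rewrite mulrC.
rewrite !mulr_suml; apply: lerD; apply: ler_sum => i _; rewrite -[leRHS]mulr1.
  by rewrite ler_wpM2l.
by rewrite ler_wpM2l.
Qed.

Lemma weighted_holder (p q : R) n (a b : 'I_n -> R) w :
  1 < p -> p^-1 + q^-1 = 1 -> doubly_substochastic w ->
  (forall i, 0 <= a i) -> (forall j, 0 <= b j) ->
  \sum_j \sum_i b j * a i * w j i <= lpnorm q a * lpnorm p b.
Proof.
move=> p_gt1 pq w_ds a0 b0.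
have p_gt0 : 0 < p := lt_trans ltr01 p_gt1.
have q_gt0 : 0 < q := lt_trans ltr01 (conjugate_exponent_gt1 p_gt1 pq).
set A := lpnorm q a; set B := lpnorm p b.
have [/(lpnorm_eq0 a0) a_eq0|A_neq0] := eqVneq A 0.
  rewrite big1 ?mulr_ge0 ?powR_ge0 // => j _.
  by rewrite big1 // => i _; rewrite a_eq0 mulr0 mul0r.
have [/(lpnorm_eq0 b0) b_eq0|B_neq0] := eqVneq B 0.
  rewrite big1 ?mulr_ge0 ?powR_ge0 // => j _.
  by rewrite big1 // => i _; rewrite b_eq0 !mul0r.
have A_gt0 : 0 < A by rewrite lt_def A_neq0 powR_ge0.
have B_gt0 : 0 < B by rewrite lt_def B_neq0 powR_ge0.
have a_norm : \sum_i (a i / A) `^ q = 1.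
  exact: sum_powR_div_lpnorm (lt0r_neq0 q_gt0) a0 A_gt0.
have b_norm : \sum_j (b j / B) `^ p = 1.
  exact: sum_powR_div_lpnorm (lt0r_neq0 p_gt0) b0 B_gt0.
clearbody A B.
have normalized : \sum_j \sum_i b j / B * (a i / A) * w j i <= 1.
  have a0' i : 0 <= a i / A := divr_ge0 (a0 i) (ltW A_gt0).
  have b0' j : 0 <= b j / B := divr_ge0 (b0 j) (ltW B_gt0).
  apply: le_trans (young_substochastic p_gt0 q_gt0 pq w_ds a0' b0') _.
  by rewrite a_norm b_norm !mul1r addrC pq.
rewrite -[A * B]mulr1 (_ : \sum_j _ = A * B * \sum_j \sum_i b j / B * (a i / A) * w j i).
  by rewrite ler_wpM2l // mulr_ge0 ?ltW.
rewrite mulr_sumr; apply: eq_bigr => j _; rewrite mulr_sumr; apply: eq_bigr => i _.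
by field; rewrite A_neq0 B_neq0.
Qed.

Lemma weighted_holder_inf n (a b : 'I_n -> R) w :
  doubly_substochastic w -> (forall i, 0 <= a i) -> (forall j, 0 <= b j) ->
  \sum_j \sum_i b j * a i * w j i <= (\big[Num.max/0]_i a i) * \sum_j b j.
Proof.
move=> [w0 w_row _] a0 b0; set M := \big[Num.max/0]_i a i.
have aM i : a i <= M by rewrite /M (bigD1 i) //= le_max lexx.
have M0 : 0 <= M by rewrite /M; elim/big_ind: _ => // x y; rewrite le_max => ->.
rewrite mulr_sumr; apply: ler_sum => j _.
apply: (@le_trans _ _ (\sum_i b j * M * w j i)).
  by apply: ler_sum => i _; rewrite ler_wpM2r // ler_wpM2l.
by rewrite -mulr_sumr [M * b j]mulrC -[leRHS]mulr1 ler_wpM2l ?mulr_ge0.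
Qed.

Lemma powR_le_of_le_mul_powR (S K p q : R) :
  0 <= S -> 0 <= K -> 0 < p -> 0 < q -> p^-1 + q^-1 = 1 ->
  S <= K * S `^ p^-1 -> S `^ q^-1 <= K.
Proof.
move=> S0 K0 p_gt0 q_gt0 pq.
have [->|S_neq0] := eqVneq S 0; first by move=> _; rewrite powR0 // invr_eq0 gt_eqF.
have P_gt0 : 0 < S `^ p^-1 by rewrite powR_gt0 // lt_def S_neq0.
rewrite -{1}[S]powRr1 // -pq powRD ?S_neq0 ?implybT // mulrC ler_pM2r //.
Qed.

End WeightedHolder.

Section SchattenHolder.
Variable R : realType.
Local Notation C := R[i].
Local Notation rdiag s := (diag_mx (\row_i (s i)%:C)).

Lemma creD (x y : C) : cre (x + y) = cre x + cre y.
Proof. by case: x; case: y. Qed.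

Lemma cre_sum (I : Type) (r : seq I) (P : pred I) (F : I -> C) :
  cre (\sum_(i <- r | P i) F i) = \sum_(i <- r | P i) cre (F i).
Proof. exact: (big_morph _ creD). Qed.

Lemma cre_realM (x : R) (z : C) : cre (x%:C * z) = x * cre z.
Proof. by case: z => a b; rewrite /cre /=; ring. Qed.

Lemma complex_ge0E (z : C) : 0 <= z -> z = (cre z)%:C /\ 0 <= cre z.
Proof. by case: z => a b; rewrite lecE /= => /andP[/eqP -> a0]. Qed.

Lemma row_complex_realmx n (s : 'I_n -> R) : \row_i (s i)%:C \is a realmx.
Proof. by apply/mxOverP => i j; rewrite mxE complex_real. Qed.

Lemma rdiagM n (f g : 'I_n -> R) : rdiag f *m rdiag g = rdiag (fun i => f i * g i).
Proof. by rewrite diag_mxM; congr diag_mx; apply/rowP => i; rewrite !mxE rmorphM. Qed.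

Lemma cre_mxtrace_rdiag n (s : 'I_n -> R) : cre (\tr (rdiag s)) = \sum_i s i.
Proof. by rewrite mxtrace_diag cre_sum; apply: eq_bigr => i _; rewrite mxE. Qed.

Lemma mxfunE (f : R -> R) n (A : 'M[C]_n) :
  mxfun f A = (spectralmx A)^t* *m
    diag_mx (map_mx (fun z => (f (cre z))%:C) (spectral_diag A)) *m spectralmx A.
Proof.
rewrite /mxfun; set d := spectral_diag A.
suff -> : map_mx (fun z => (f (cre z))%:C) d = \row_i (f (cre (d 0 i)))%:C by [].
by apply/rowP => i; rewrite !mxE.
Qed.

Lemma mxfun_unitary_conj (f : R -> R) n (W : 'M[C]_n) (s : 'I_n -> R) :
  W \is unitarymx ->
  mxfun f (W^t* *m rdiag s *m W) = W^t* *m rdiag (fun i => f (s i)) *m W.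
Proof.
move=> uW; rewrite mxfunE (spectral_map_unitary_conj (fun z => (f (cre z))%:C) _ uW).
suff -> : map_mx (fun z => (f (cre z))%:C) (\row_i (s i)%:C) = \row_i (f (s i))%:C by [].
by apply/rowP => i; rewrite !mxE.
Qed.

Definition singval m n (X : 'M[C]_(m, n)) (i : 'I_n) : R :=
  Num.sqrt (cre (spectral_diag (X^t* *m X) 0 i)).

Lemma singval_ge0 m n (X : 'M[C]_(m, n)) i : 0 <= singval X i.
Proof. exact: sqrtr_ge0. Qed.

Lemma spectral_diag_singval m n (X : 'M[C]_(m, n)) :
  spectral_diag (X^t* *m X) = \row_i (singval X i ^+ 2)%:C.
Proof.
apply/rowP => i; rewrite mxE /singval.
have := unitary_conj_diag_ge0 (spectral_unitarymx _)
  (normalmx_spectral (adj_mulmx_normalmx X)) i.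
by move=> /complex_ge0E[e d0]; rewrite sqr_sqrtr // -e.
Qed.

Lemma adj_mulmx_svd m n (X : 'M[C]_(m, n)) :
  let V := spectralmx (X^t* *m X) in
  X^t* *m X = V^t* *m rdiag (singval X) *m rdiag (singval X) *m V.
Proof.
move=> V; rewrite -(mulmxA (V^t*)) rdiagM {1}(normalmx_spectral (adj_mulmx_normalmx X)).
by rewrite spectral_diag_singval; congr (_ *m diag_mx _ *m _); apply/rowP => i; rewrite !mxE.
Qed.

Lemma schatten_svd (r : R) m n (X : 'M[C]_(m, n)) (W : 'M[C]_n) (s : 'I_n -> R) :
  W \is unitarymx -> (forall i, 0 <= s i) ->
  X^t* *m X = W^t* *m rdiag s *m rdiag s *m W -> schatten r X = lpnorm r s.
Proof.
move=> uW s0 eX; rewrite /schatten /absmx eX -(mulmxA (W^t*)) rdiagM.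
rewrite !mxfun_unitary_conj // mxtrace_unitary_conj // cre_mxtrace_rdiag.
by congr (_ `^ _); apply: eq_bigr => i _; rewrite -expr2 sqrtr_sqr ger0_norm.
Qed.

Lemma schattenE (r : R) m n (X : 'M[C]_(m, n)) : schatten r X = lpnorm r (singval X).
Proof. exact: schatten_svd (spectral_unitarymx _) (@singval_ge0 _ _ X) (adj_mulmx_svd X). Qed.

Definition sqnorm (z : C) : R := complex.Re z ^+ 2 + complex.Im z ^+ 2.

Lemma sqnormE (z : C) : (sqnorm z)%:C = `|z| ^+ 2.
Proof. exact: add_Re2_Im2. Qed.

Lemma sqnorm_ge0 (z : C) : 0 <= sqnorm z.
Proof. by rewrite addr_ge0 ?sqr_ge0. Qed.

Lemma cre_mul_le_sqnorm (h z : C) : cre (h * z) <= (sqnorm h + sqnorm z) / 2.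
Proof.
case: h z => a b [c d]; rewrite /sqnorm /cre /=.
have := sqr_ge0 (a - c); have := sqr_ge0 (b + d); nra.
Qed.

Lemma mulmx_adj_diag_sqnorm m n (Z : 'M[C]_(m, n)) i :
  (Z *m Z^t*) i i = (\sum_k sqnorm (Z i k))%:C.
Proof. by rewrite mulmx_adj_diagE rmorph_sum; apply: eq_bigr => k _; rewrite -sqnormE. Qed.

Lemma adj_mulmx_diag_sqnorm m n (Z : 'M[C]_(m, n)) j :
  (Z^t* *m Z) j j = (\sum_k sqnorm (Z k j))%:C.
Proof. by rewrite adj_mulmx_diagE rmorph_sum; apply: eq_bigr => k _; rewrite -sqnormE. Qed.

Lemma sqnorm_doubly_substochastic n (H M : 'M[C]_n) :
  (forall j, (H *m H^t*) j j <= 1) -> (forall i, (H^t* *m H) i i <= 1) ->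
  M \is unitarymx ->
  doubly_substochastic (fun j i => (sqnorm (H j i) + sqnorm (M i j)) / 2).
Proof.
move=> H_row H_col uM.
have M_row j : \sum_i sqnorm (M i j) = 1.
  apply: complexI; rewrite -adj_mulmx_diag_sqnorm unitary_adj_mulmx // mxE eqxx /=.
  exact/esym/rmorph1.
have M_col i : \sum_j sqnorm (M i j) = 1.
  apply: complexI; rewrite -mulmx_adj_diag_sqnorm (unitarymxP uM) mxE eqxx /=.
  exact/esym/rmorph1.
split.
- by move=> j i; apply: divr_ge0 => //; exact: addr_ge0 (sqnorm_ge0 _) (sqnorm_ge0 _).
- move=> j; rewrite -mulr_suml big_split /= M_row ler_pdivrMr // mul1r.
  by rewrite lerD2r -lecR rmorph1 -mulmx_adj_diag_sqnorm.
- move=> i; rewrite -mulr_suml big_split /= M_col ler_pdivrMr // mul1r.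
  by rewrite lerD2r -lecR rmorph1 -adj_mulmx_diag_sqnorm.
Qed.

Lemma mxtrace_rdiag_mul n (t s : 'I_n -> R) (H M : 'M[C]_n) :
  cre (\tr (rdiag t *m H *m rdiag s *m M))
  = \sum_j \sum_i t j * s i * cre (H j i * M i j).
Proof.
rewrite /mxtrace cre_sum; apply: eq_bigr => j _; rewrite mxE cre_sum.
apply: eq_bigr => i _; rewrite mul_mx_diag mul_diag_mx !mxE -cre_realM rmorphM.
by congr cre; ring.
Qed.

Lemma trace_le_singval m n (X Y : 'M[C]_(m, n)) :
  exists2 w, doubly_substochastic w &
    cre (\tr (Y^t* *m X)) <= \sum_j \sum_i singval Y j * singval X i * w j i.
Proof.
have [H [M [-> H_row H_col uM]]] := trace_adj_mul_factor
  (spectral_unitarymx _) (spectral_unitarymx _)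
  (row_complex_realmx (singval X)) (row_complex_realmx (singval Y))
  (adj_mulmx_svd X) (adj_mulmx_svd Y).
exists (fun j i => (sqnorm (H j i) + sqnorm (M i j)) / 2).
  exact: sqnorm_doubly_substochastic.
rewrite mxtrace_rdiag_mul; apply: ler_sum => j _; apply: ler_sum => i _.
by rewrite ler_wpM2l ?mulr_ge0 ?singval_ge0 ?cre_mul_le_sqnorm.
Qed.

Lemma schatten_holder (p q : R) m n (X Y : 'M[C]_(m, n)) :
  1 < p -> p^-1 + q^-1 = 1 -> cre (\tr (Y^t* *m X)) <= schatten q X * schatten p Y.
Proof.
move=> p_gt1 pq; have [w w_ds] := trace_le_singval X Y.
move=> /le_trans; apply; rewrite !schattenE.
exact: weighted_holder p_gt1 pq w_ds (@singval_ge0 _ _ X) (@singval_ge0 _ _ Y).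
Qed.

Lemma schatten_inf_holder m n (X Y : 'M[C]_(m, n)) :
  cre (\tr (Y^t* *m X)) <= schatten_inf X * schatten 1 Y.
Proof.
have [w w_ds] := trace_le_singval X Y; move=> /le_trans; apply.
rewrite schattenE lpnorm1; last exact: singval_ge0.
exact: weighted_holder_inf w_ds (@singval_ge0 _ _ X) (@singval_ge0 _ _ Y).
Qed.

Lemma schatten_inf_ge0 m n (X : 'M[C]_(m, n)) : 0 <= schatten_inf X.
Proof.
rewrite /schatten_inf; elim/big_ind: _ => // [x y x0 _|i _]; last exact: sqrtr_ge0.
by rewrite le_max x0.
Qed.

End SchattenHolder.

Section SchattenDuality.
Variable R : realType.
Local Notation C := R[i].
Local Notation rdiag s := (diag_mx (\row_i (s i)%:C)).

(* [X *m g(|X|)]: the singular values of [X] scaled by [g], same singular vectors. *)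
Definition singular_rescale m n (X : 'M[C]_(m, n)) (g : 'I_n -> R) : 'M[C]_(m, n) :=
  X *m ((spectralmx (X^t* *m X))^t* *m rdiag g *m spectralmx (X^t* *m X)).

Lemma trace_singular_rescale m n (X : 'M[C]_(m, n)) (g : 'I_n -> R) :
  cre (\tr ((singular_rescale X g)^t* *m X)) = \sum_i g i * singval X i ^+ 2.
Proof.
have [_ ->] := unitary_conj_rescale (spectral_unitarymx _) (row_complex_realmx g)
  (adj_mulmx_svd X).
rewrite !rdiagM cre_mxtrace_rdiag; apply: eq_bigr => i _; ring.
Qed.

Lemma schatten_singular_rescale (r : R) m n (X : 'M[C]_(m, n)) (g : 'I_n -> R) :
  (forall i, 0 <= g i) ->
  schatten r (singular_rescale X g) = lpnorm r (fun i => g i * singval X i).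
Proof.
move=> g0; have [eY _] := unitary_conj_rescale (spectral_unitarymx _)
  (row_complex_realmx g) (adj_mulmx_svd X).
rewrite rdiagM in eY; apply: schatten_svd (spectral_unitarymx _) _ eY.
by move=> i; rewrite mulr_ge0 ?singval_ge0.
Qed.

Lemma schatten_le_dual (p q K : R) m n (T : 'M[C]_(m, n)) :
  1 < p -> p^-1 + q^-1 = 1 -> 0 <= K ->
  (forall Y, cre (\tr (Y^t* *m T)) <= K * schatten p Y) -> schatten q T <= K.
Proof.
move=> p_gt1 pq K0 dual; have q_gt1 := conjugate_exponent_gt1 p_gt1 pq.
have p_gt0 : 0 < p := lt_trans ltr01 p_gt1.
have q_gt0 : 0 < q := lt_trans ltr01 q_gt1.
have qp : (q - 1) * p = q.
  apply/eqP; rewrite -subr_eq0.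
  have -> : (q - 1) * p - q = p * q * (1 - (p^-1 + q^-1)) by field; rewrite !gt_eqF.
  by rewrite pq subrr mulr0.
pose s := singval T; pose g i := s i `^ (q - 1 - 1).
have s0 i : 0 <= s i := singval_ge0 T i.
have q1_gt0 : 0 < q - 1 by rewrite subr_gt0.
have gs i : g i * s i = s i `^ (q - 1) by rewrite mulrC mulr_powRB1.
have gs2 i : g i * s i ^+ 2 = s i `^ q by rewrite expr2 mulrA gs mulrC mulr_powRB1.
have gsp i : (g i * s i) `^ p = s i `^ q by rewrite gs -powRrM qp.
have := dual (singular_rescale T g).
rewrite trace_singular_rescale schatten_singular_rescale => [|i]; last exact: powR_ge0.
rewrite /lpnorm -/s (eq_bigr _ (fun i _ => gs2 i)) (eq_bigr _ (fun i _ => gsp i)).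
rewrite schattenE; apply: powR_le_of_le_mul_powR => //.
by rewrite sumr_ge0 // => i _; exact: powR_ge0.
Qed.

Lemma schatten_inf_le_dual (K : R) m n (T : 'M[C]_(m, n)) :
  0 <= K -> (forall Y, cre (\tr (Y^t* *m T)) <= K * schatten 1 Y) ->
  schatten_inf T <= K.
Proof.
move=> K0 dual; rewrite /schatten_inf.
elim/big_ind: _ => // [x y x_le y_le|j _]; first by rewrite ge_max x_le.
change (singval T j <= K).
pose g i : R := (i == j)%:R.
have g_sum (F : 'I_n -> R) : \sum_i g i * F i = F j.
  rewrite (bigD1 j) // big1 => [|i /negbTE ji]; last by rewrite /g ji mul0r.
  by rewrite /g eqxx mul1r /= addr0.
have := dual (singular_rescale T g).
rewrite trace_singular_rescale schatten_singular_rescale => [|i]; last exact: ler0n.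
rewrite lpnorm1 => [|i]; last by rewrite mulr_ge0 ?ler0n ?singval_ge0.
rewrite !g_sum.
have [->|sj_neq0] := eqVneq (singval T j) 0; first by [].
by rewrite expr2 ler_pM2r // lt_def sj_neq0 singval_ge0.
Qed.

End SchattenDuality.

Section BlockCompression.
Variable R : realType.
Local Notation C := R[i].

Lemma blockT_submxrow N m1 m2 (q : 'I_N -> nat) (Y : 'M[C]_(m1 + m2, \sum_k q k)) :
  Y = blockT (submxrow (usubmx Y)) (submxrow (dsubmx Y)).
Proof. by rewrite /blockT !submxrowK vsubmxK. Qed.

Lemma adj_mxrow N m (q : 'I_N -> nat) (S : forall k, 'M[C]_(m, q k)) :
  (\mxrow_k S k)^t* = \mxcol_k (S k)^t*.
Proof. by apply/matrixP => i j; rewrite !mxE. Qed.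

Lemma mxtrace_adj_blockT N m1 m2 (q : 'I_N -> nat)
    (A S : forall k, 'M[C]_(m1, q k)) (B Rb : forall k, 'M[C]_(m2, q k)) :
  \tr ((blockT S Rb)^t* *m blockT A B)
  = \sum_k (\tr ((S k)^t* *m A k) + \tr ((Rb k)^t* *m B k)).
Proof.
rewrite /blockT tr_col_mx map_row_mx mul_row_col mxtraceD !adj_mxrow.
by rewrite !mul_mxcol_mxrow !mxtrace_mxblock big_split.
Qed.

Lemma cre_mxtrace_adj_compress (f g : forall m n, 'M[C]_(m, n) -> R) N m1 m2
    (q : 'I_N -> nat) (A S : forall k, 'M[C]_(m1, q k)) (B Rb : forall k, 'M[C]_(m2, q k)) :
  cre (\tr ((compress_with g S Rb)^t* *m compress_with f A B))
  = \sum_k (f _ _ (A k) * g _ _ (S k) + f _ _ (B k) * g _ _ (Rb k)).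
Proof.
rewrite /mxtrace cre_sum; apply: eq_bigr => k _.
rewrite mxE !big_ord_recl big_ord0 addr0 !creD !mxE /=.
by rewrite oppr0 mul0r !subr0 mulrC [X in _ + X = _]mulrC.
Qed.

Section Duality.
Variables nx ny : forall m n, 'M[C]_(m, n) -> R.
Hypothesis holder : forall m n (X Y : 'M[C]_(m, n)), cre (\tr (Y^t* *m X)) <= nx X * ny Y.
Hypothesis nx_ge0 : forall m n (X : 'M[C]_(m, n)), 0 <= nx X.

(* Hölder blockwise, then Hölder for the compressions, then compression for [ny]. *)
Lemma compress_duality N m1 m2 (q : 'I_N -> nat)
    (A : forall k, 'M[C]_(m1, q k)) (B : forall k, 'M[C]_(m2, q k)) :
  (forall (S : forall k, 'M[C]_(m1, q k)) (Rb : forall k, 'M[C]_(m2, q k)),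
      ny (compress_with ny S Rb) <= ny (blockT S Rb)) ->
  forall Y, cre (\tr (Y^t* *m blockT A B)) <= nx (compress_with nx A B) * ny Y.
Proof.
move=> ny_compress Y; rewrite [Y]blockT_submxrow.
move: (submxrow (usubmx Y)) (submxrow (dsubmx Y)) => S Rb.
apply: (@le_trans _ _ (cre (\tr ((compress_with ny S Rb)^t* *m compress_with nx A B)))).
  rewrite cre_mxtrace_adj_compress mxtrace_adj_blockT cre_sum.
  by apply: ler_sum => k _; rewrite creD lerD ?holder.
exact: le_trans (holder _ _) (ler_wpM2l (nx_ge0 _) (ny_compress S Rb)).
Qed.

End Duality.

End BlockCompression.

Theorem mainTheorem1 (R : realType) (p : R) (N : nat) :
  1 <= p -> p <= 2 -> (1 <= N)%N ->
  (forall (m1 m2 : nat) (n : 'I_N -> nat)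
          (S : forall k : 'I_N, 'M[R[i]]_(m1, n k))
          (Rb : forall k : 'I_N, 'M[R[i]]_(m2, n k)),
      schatten p (compress p S Rb) <= schatten p (blockT S Rb)) ->
  (forall p' : R, 1 < p -> p^-1 + p'^-1 = 1 ->
   forall (m1 m2 : nat) (n : 'I_N -> nat)
          (A : forall k : 'I_N, 'M[R[i]]_(m1, n k))
          (B : forall k : 'I_N, 'M[R[i]]_(m2, n k)),
     schatten p' (blockT A B) <= schatten p' (compress p' A B))
  /\
  (p = 1 ->
   forall (m1 m2 : nat) (n : 'I_N -> nat)
          (A : forall k : 'I_N, 'M[R[i]]_(m1, n k))
          (B : forall k : 'I_N, 'M[R[i]]_(m2, n k)),
     schatten_inf (blockT A B) <= schatten_inf (compress_inf A B)).
Proof.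
move=> _ _ _ compress_le; split.
- move=> p' p_gt1 pp' m1 m2 n A B.
  apply: (schatten_le_dual p_gt1 pp' (powR_ge0 _ _)).
  apply: (compress_duality (nx := fun m n X => schatten p' X)) (compress_le m1 m2 n).
  + by move=> ? ? X Y; exact: schatten_holder p_gt1 pp'.
  + by move=> ? ? X; exact: powR_ge0.
- move=> p1 m1 m2 n A B; rewrite p1 in compress_le.
  apply: (schatten_inf_le_dual (schatten_inf_ge0 _)).
  apply: (compress_duality (nx := fun m n X => schatten_inf X)) (compress_le m1 m2 n).
  + by move=> ? ? X Y; exact: schatten_inf_holder.
  + by move=> ? ? X; exact: schatten_inf_ge0.
Qed.
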